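(* Let $V$ be a finite set, $C$ a partition of $V$, $k>0$, $G=(V,E)$ the clique graph of $C$ with edge weight $k$, and let $M\ge 0$ and $\beta>0$. Let $d$ be a cluster in some clustering of $G$ (so $d$ is a nonempty subset of $V$), and put $q(d)=\frac{w_d}{M+v_d/\beta}-\left(\frac{v_d}{M+v_d/\beta}\right)^2$. Then $$\frac{w_d}{v_d}-\beta-\frac{\beta M}{k}\;\le\;\frac{q(d)}{\beta}\;\le\;\frac{w_d}{v_d}-\beta+\frac{2\beta^2M}{k}.$$
   Context: The clique graph of a partition $C$ of $V$ with edge weight $k$ is $G=(V,E)$ with $E(i,j)=k$ if $i$ and $j$ lie in the same block of $C$ (including $i=j$) and $E(i,j)=0$ otherwise. For $d\subseteq V$: $v_d=\sum_{i\in d}\sum_{j\in V}E(i,j)$ and $w_d=\sum_{i,j\in d}E(i,j)$. The quantity $q(d)$ is the contribution of $d$ to the adaptive scale modularity with parameters $M$ and $\gamma=1/\beta$. *)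

From mathcomp Require Import all_boot all_order all_algebra.
Set Implicit Arguments. Unset Strict Implicit. Unset Printing Implicit Defensive.
Import Order.TTheory GRing.Theory Num.Theory.
Local Open Scope ring_scope.

Definition cliqueE (R : realFieldType) (V : finType) (C : {set {set V}}) (k : R)
  (i j : V) : R :=
  if [exists B in C, (i \in B) && (j \in B)] then k else 0.

Definition vol (R : realFieldType) (V : finType) (E : V -> V -> R) (d : {set V}) : R :=
  \sum_(i in d) \sum_(j : V) E i j.

Definition wt (R : realFieldType) (V : finType) (E : V -> V -> R) (d : {set V}) : R :=
  \sum_(i in d) \sum_(j in d) E i j.

(* contribution of d to the adaptive scale modularity, gamma = 1/beta *)
Definition qasm (R : realFieldType) (V : finType) (E : V -> V -> R)
  (M beta : R) (d : {set V}) : R :=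
  wt E d / (M + vol E d / beta) - (vol E d / (M + vol E d / beta)) ^+ 2.

From mathcomp Require Import all_boot all_order all_algebra.
From mathcomp Require Import ring lra.
Import Order.TTheory GRing.Theory Num.Theory.
Set Implicit Arguments. Unset Strict Implicit. Unset Printing Implicit Defensive.
Local Open Scope ring_scope.

(* Every vertex lies in a block of C, so E i i = k and hence v_d >= k, while
   0 <= w_d <= v_d.  With m = beta M, q(d)/beta = w/(v+m) - beta (v/(v+m))^2,
   and both bounds come from trading the denominator v + m for v: the first
   term moves by (w/v) m/(v+m) <= m/(v+m) <= m/k, the second by
   beta (1 - (v/(v+m))^2) = beta m (2v+m)/(v+m)^2 <= 2 beta m/k. *)

Section VolumeWeight.
Variables (R : realFieldType) (V : finType) (E : V -> V -> R).
Hypothesis E_ge0 : forall i j, 0 <= E i j.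

Lemma wt_ge0 (d : {set V}) : 0 <= wt E d.
Proof. by apply: sumr_ge0 => i _; apply: sumr_ge0. Qed.

Lemma wt_le_vol (d : {set V}) : wt E d <= vol E d.
Proof.
apply: ler_sum => i _; rewrite [X in _ <= X](bigID (mem d)) /= lerDl.
exact: sumr_ge0.
Qed.

Lemma diag_le_vol (d : {set V}) x : x \in d -> E x x <= vol E d.
Proof.
move=> xd; rewrite /vol (bigD1 x) //= (bigD1 x) //= -addrA lerDl.
by apply: addr_ge0; apply: sumr_ge0 => *; [exact: E_ge0 | exact: sumr_ge0].
Qed.

End VolumeWeight.

Lemma cliqueE_ge0 (R : realFieldType) (V : finType) (C : {set {set V}}) (k : R) i j :
  0 <= k -> 0 <= cliqueE C k i j.
Proof. by rewrite /cliqueE; case: ifP. Qed.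

Lemma cliqueE_diag (R : realFieldType) (V : finType) (C : {set {set V}}) (k : R) i :
  cover C = [set: V] -> cliqueE C k i i = k.
Proof.
move=> covC; rewrite /cliqueE ifT //.
have : i \in cover C by rewrite covC inE.
by case/bigcupP => B BC iB; apply/existsP; exists B; rewrite BC iB.
Qed.

Lemma cliqueE_vol_ge (R : realFieldType) (V : finType) (C : {set {set V}}) (k : R)
    (d : {set V}) :
  cover C = [set: V] -> 0 <= k -> d != set0 -> k <= vol (cliqueE C k) d.
Proof.
move=> covC k0 /set0Pn [x xd].
rewrite -{1}(cliqueE_diag k x covC); apply: (diag_le_vol _ xd) => i j.
exact: cliqueE_ge0.
Qed.

Lemma qasm_div_beta (R : realFieldType) (V : finType) (E : V -> V -> R) (M beta : R)
    (d : {set V}) :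
  0 < beta -> 0 < vol E d + beta * M ->
  qasm E M beta d / beta =
  wt E d / (vol E d + beta * M)
  - beta * (vol E d / (vol E d + beta * M)) ^+ 2.
Proof.
move=> b0 vm0; rewrite /qasm.
have -> : M + vol E d / beta = (vol E d + beta * M) / beta.
  by field; rewrite gt_eqF.
by field; rewrite !gt_eqF.
Qed.

Section DenominatorShift.
Variables (R : realFieldType) (w v m : R).
Hypotheses (w_ge0 : 0 <= w) (v_gt0 : 0 < v) (m_ge0 : 0 <= m).

Let vm_gt0 : 0 < v + m. Proof. by rewrite ltr_wpDr. Qed.

Lemma div_addr_le : w / (v + m) <= w / v.
Proof. by rewrite ler_wpM2l // lef_pV2 ?posrE // lerDl. Qed.

Lemma sqr_div_addr_le1 : (v / (v + m)) ^+ 2 <= 1.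
Proof.
rewrite expr_le1 //; last exact: divr_ge0 (ltW v_gt0) (ltW vm_gt0).
by rewrite ler_pdivrMr // mul1r lerDl.
Qed.

Variable k : R.
Hypotheses (k_gt0 : 0 < k) (k_le_v : k <= v).

Lemma frac_addr_le : m / (v + m) <= m / k.
Proof. by rewrite ler_wpM2l // lef_pV2 ?posrE // ler_wpDr. Qed.

Lemma div_addr_ge : w <= v -> w / v - m / k <= w / (v + m).
Proof.
move=> w_le_v.
have gap : w / v - w / (v + m) = w / v * (m / (v + m)).
  by field; rewrite !gt_eqF.
rewrite lerBlDr -lerBlDl gap (le_trans _ frac_addr_le) //.
rewrite -[leRHS]mul1r ler_wpM2r //; first exact: divr_ge0 m_ge0 (ltW vm_gt0).
by rewrite ler_pdivrMr // mul1r.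
Qed.

Lemma one_sub_sqr_div_addr_le : 1 - (v / (v + m)) ^+ 2 <= 2 * m / k.
Proof.
have -> : 1 - (v / (v + m)) ^+ 2 = m / (v + m) * ((2 * v + m) / (v + m)).
  by field; rewrite gt_eqF.
have le2 : (2 * v + m) / (v + m) <= 2.
  by rewrite ler_pdivrMr // mulrDr lerD2l mulr_natl mulr2n lerDr.
apply: (le_trans (y := m / (v + m) * 2)); first by rewrite ler_wpM2l // divr_ge0 // ltW.
by rewrite -[2 * m / k]mulrA [2 * _]mulrC ler_wpM2r // frac_addr_le.
Qed.

End DenominatorShift.

Theorem lemma3 (R : realFieldType) (V : finType) (C : {set {set V}}) (k M beta : R)
  (d : {set V}) :
  partition C [set: V] -> 0 < k -> 0 <= M -> 0 < beta -> d != set0 ->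
  let E := cliqueE C k in
  wt E d / vol E d - beta - beta * M / k <= qasm E M beta d / beta /\
  qasm E M beta d / beta <= wt E d / vol E d - beta + 2 * beta ^+ 2 * M / k.
Proof.
move=> /and3P [/eqP covC _ _] k0 M0 b0 dn E.
have E_ge0 i j : 0 <= E i j by exact: cliqueE_ge0 (ltW k0).
have m0 : 0 <= beta * M by rewrite mulr_ge0 // ltW.
have kv : k <= vol E d by exact: cliqueE_vol_ge covC (ltW k0) dn.
have v0 : 0 < vol E d := lt_le_trans k0 kv.
rewrite qasm_div_beta ?ltr_wpDr //.
have lo := div_addr_ge v0 m0 k0 kv (wt_le_vol E_ge0 d).
have hi := div_addr_le (wt_ge0 E_ge0 d) v0 m0.
have sq1 := ler_wpM2l (ltW b0) (sqr_div_addr_le1 v0 m0).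
have sq2 := ler_wpM2l (ltW b0) (one_sub_sqr_div_addr_le v0 m0 k0 kv).
have -> : 2 * beta ^+ 2 * M / k = beta * (2 * (beta * M) / k) by ring.
rewrite mulr1 mulrBr mulr1 in sq1 sq2; split; lra.
Qed.
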